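(* Let $n$ be even and $F\colon\mathbb F_2^n\to\mathbb F_2^n$ a quadratic function. Assume $N_F\cup\{0\}$ contains two subspaces $V,W\le\mathbb F_2^n$ with $V\oplus W=\mathbb F_2^n$. Then $|N_F|\ge 3\cdot(2^{n/2}-1)$. Furthermore, $N_F$ is a $3$-fold blocking set of $\mathrm{PG}(n-1,2)$ with respect to $(n/2)$-spaces, i.e. every subspace $U\le\mathbb F_2^n$ with $\dim U=\frac n2+1$ satisfies $|U\cap N_F|\ge3$.
   Context: $\langle\cdot,\cdot\rangle$ is the standard dot product; $F_b(x)=\langle b,F(x)\rangle$. $F$ is quadratic if each $F_b$ is a quadratic form plus an affine function. $F_b$ is bent if $|\sum_x(-1)^{F_b(x)+\langle x,a\rangle}|=2^{n/2}$ for all $a$. $N_F=\{b\in\mathbb F_2^n\setminus\{0\}\colon F_b\text{ not bent}\}$. $\mathrm{PG}(n-1,2)$ is identified with $\mathbb F_2^n\setminus\{0\}$; an $(n/2)$-space is $U\setminus\{0\}$ for a subspace $U$ of dimension $n/2+1$. *)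

(* Vectors of F_2^n are row vectors 'rV['F_2]_n;
   subspaces are row spaces of square matrices (mxalgebra). *)
From HB Require Import structures.
From mathcomp Require Import all_boot all_order all_algebra.
Set Implicit Arguments. Unset Strict Implicit. Unset Printing Implicit Defensive.
Import GRing.Theory Num.Theory.
Local Open Scope ring_scope.

Definition dot (n : nat) (u v : 'rV['F_2]_n) : 'F_2 := (u *m v^T) 0 0.

Definition compF (n : nat) (F : 'rV['F_2]_n -> 'rV['F_2]_n) (b x : 'rV['F_2]_n) : 'F_2 :=
  dot b (F x).

Definition qform (n : nat) (A : 'M['F_2]_n) (x : 'rV['F_2]_n) : 'F_2 :=
  (x *m A *m x^T) 0 0.

Definition quadratic_fun (n : nat) (F : 'rV['F_2]_n -> 'rV['F_2]_n) : Prop :=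
  forall b : 'rV['F_2]_n, exists (A : 'M['F_2]_n) (c : 'rV['F_2]_n) (d : 'F_2),
    forall x, compF F b x = qform A x + dot c x + d.

Definition walsh (n : nat) (f : 'rV['F_2]_n -> 'F_2) (a : 'rV['F_2]_n) : int :=
  \sum_(x : 'rV['F_2]_n) (-1) ^+ (nat_of_ord (f x + dot x a)).

Definition bent (n : nat) (f : 'rV['F_2]_n -> 'F_2) : bool :=
  [forall a : 'rV['F_2]_n, `|walsh f a| == (2 ^ n./2)%:R].

Definition NF (n : nat) (F : 'rV['F_2]_n -> 'rV['F_2]_n) : {set 'rV['F_2]_n} :=
  [set b | (b != 0) && ~~ bent (compF F b)].

Definition vecs (n : nat) (U : 'M['F_2]_n) : {set 'rV['F_2]_n} :=
  [set u | (u <= U)%MS].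

(* For quadratic F the second derivative of the component F_b is the bilinear
   form of an alternating matrix M_b, linear in b, and (n even) squaring the
   Walsh transform shows that F_b is bent iff det M_b <> 0.  Over F_2 the
   determinant is the permanent; pairing each permutation with its inverse
   leaves the fixed-point-free involutions s, and if dim U > n/2 some nonzero
   u in U kills every M_u(i, s i), so translation by u pairs off the remaining
   terms of sum_(b in U) det M_b.  Hence every subspace of dimension > n/2
   meets N_F in an odd number of points.  A subspace U of dimension n/2 + 1
   contains at least two nonzero vectors of U :&: V and U :&: W, hence a third
   point of N_F.  If dim V = k <= n/2 and v in V \ 0, then <v> + W meets N_F
   oddly while v and W \ 0 give an even number of points, so the coset v + W
   holds another point of N_F, outside V and W; thus
   |N_F| >= 2 (2^k - 1) + 2^(n-k) - 1 >= 3 (2^(n/2) - 1). *)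

From HB Require Import structures.
From mathcomp Require Import all_boot all_order all_algebra.
From mathcomp Require Import fingroup perm ring zify.
From mathcomp Require mxabelem.
Set Implicit Arguments. Unset Strict Implicit. Unset Printing Implicit Defensive.
Import GRing.Theory Num.Theory.
Local Open Scope ring_scope.

Lemma F2P (t : 'F_2) : t = 0 \/ t = 1.
Proof. by case: t => [[|[|]]] //= ?; [left|right]; apply/val_inj. Qed.

Lemma F2_two : 2 = 0 :> 'F_2.
Proof. exact/val_inj. Qed.

Lemma F2_addrr (t : 'F_2) : t + t = 0.
Proof. exact/addrr_pchar2/pchar_Fp. Qed.

Lemma F2_natr_eq0 k : (k%:R == 0 :> 'F_2) = ~~ odd k.
Proof. by rewrite -(Fp_nat_mod (p := 2)) // modn2; case: (odd k). Qed.

Lemma addmx_F2 p q (A : 'M['F_2]_(p, q)) : A + A = 0.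
Proof. by apply/matrixP => i j; rewrite !mxE F2_addrr. Qed.

Lemma addmx_eq0_F2 p q (A B : 'M['F_2]_(p, q)) : (A + B == 0) = (A == B).
Proof.
apply/eqP/eqP => [/addr0_eq <- | ->]; last exact: addmx_F2.
by rewrite (addr0_eq (addmx_F2 A)).
Qed.

Lemma sum_involution_pchar2 (R : nzRingType) (T : finType) (P : pred T)
    (f : T -> T) (g : T -> R) :
    2 \in [pchar R] -> involutive f -> {mono f : x / P x} ->
    (forall x, P x -> g (f x) = g x) ->
  \sum_(x | P x) g x = \sum_(x | P x && (f x == x)) g x.
Proof.
move=> pchar2 fK Pf gf; rewrite (bigID (fun x => f x == x)) /= -[RHS]addr0.
congr (_ + _); rewrite (bigID (fun x => enum_rank x < enum_rank (f x))%N) /=.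
rewrite [X in _ + X](reindex_inj (inv_inj fK)) /=.
set S := (X in X + _ = 0); rewrite -[RHS](addrr_pchar2 pchar2 S); congr (_ + _).
symmetry; apply: eq_big => [x | x /andP[/andP[Pfx _] _]]; last by rewrite gf // -Pf.
rewrite Pf fK [f x == x]eq_sym.
case: (eqVneq x (f x)) => [<-|xfx]; rewrite ?eqxx ?andbF //=.
have rankx : enum_rank x != enum_rank (f x) by rewrite (inj_eq enum_rank_inj).
by rewrite -leqNgt ltn_neqAle rankx.
Qed.

Lemma det_pchar2 (R : comNzRingType) n (A : 'M[R]_n) :
  2 \in [pchar R] -> \det A = \sum_(s : 'S_n) \prod_i A i (s i).
Proof. by move=> pchar2; apply: eq_bigr => s _; rewrite oppr_pchar2 // expr1n mul1r. Qed.

Lemma addmx_subr (F : fieldType) m1 m2 n (A B : 'M[F]_(m1, n)) (C : 'M_(m2, n)) :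
  (B <= C)%MS -> ((A + B)%R <= C)%MS = (A <= C)%MS.
Proof.
move=> BC; apply/idP/idP => [ABC | AC]; last exact: addmx_sub.
by rewrite -(addrK B A); apply: addmx_sub; rewrite ?eqmx_opp.
Qed.

Lemma card_vecs n (U : 'M['F_2]_n) : #|vecs U| = (2 ^ \rank U)%N.
Proof. by rewrite [vecs U]/(mxabelem.rowg U) mxabelem.card_rowg card_Fp. Qed.

Lemma card_vecsD1 n (X : 'M['F_2]_n) : #|vecs X :\ 0| = (2 ^ \rank X - 1)%N.
Proof. by rewrite -card_vecs (cardsD1 0 (vecs X)) inE sub0mx add1n subn1. Qed.

Lemma card_lt_involution n (s : 'I_n -> 'I_n) :
  involutive s -> (forall i, s i != i) -> #|[set i : 'I_n | (i < s i)%N]| = n./2.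
Proof.
move=> sK s_fpf; set R := [set i : 'I_n | (i < s i)%N].
have sR : s @: R = ~: R.
  apply/setP => j; rewrite !inE; apply/imsetP/idP => [[i iR ->] | jR].
    by move: iR; rewrite inE sK -leqNgt => /ltnW.
  exists (s j); rewrite ?sK // inE sK ltn_neqAle leqNgt jR andbT.
  by rewrite (inj_eq val_inj) (s_fpf j).
have := cardsC R; rewrite -sR card_imset ?card_ord; last exact: inv_inj.
by move=> n_eq; rewrite -[in RHS]n_eq addnn doubleK.
Qed.

Definition sgn (t : 'F_2) : int := (-1) ^+ t.

Lemma walshE n (f : 'rV['F_2]_n -> 'F_2) a : walsh f a = \sum_x sgn (f x + dot x a).
Proof. by []. Qed.

Lemma sgnD t u : sgn (t + u) = sgn t * sgn u.
Proof. by case: (F2P t) => ->; case: (F2P u) => ->. Qed.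

Lemma sgn_neq0 t : sgn t != 0.
Proof. by case: (F2P t) => ->. Qed.

Section DotProduct.
Variable n : nat.
Implicit Types x y v : 'rV['F_2]_n.

Lemma dotDl x y v : dot (x + y) v = dot x v + dot y v.
Proof. by rewrite /dot mulmxDl mxE. Qed.

Lemma dotC x y : dot x y = dot y x.
Proof. by rewrite /dot -[x *m y^T]trmxK trmx_mul trmxK [in LHS]mxE. Qed.

Lemma dotDr v x y : dot v (x + y) = dot v x + dot v y.
Proof. by rewrite dotC dotDl !(dotC v). Qed.

Lemma dot0l v : dot 0 v = 0.
Proof. by rewrite /dot mul0mx mxE. Qed.

Lemma dot0r v : dot v 0 = 0.
Proof. by rewrite dotC dot0l. Qed.

Lemma dot_delta i v : dot (delta_mx 0 i) v = v 0 i.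
Proof. by rewrite /dot -rowE !mxE. Qed.

Lemma card_rV_F2 : #|{: 'rV['F_2]_n}| = (2 ^ n)%N.
Proof. by rewrite card_mx card_Fp // mul1n. Qed.

Lemma sum_sgn_dot v :
  \sum_x sgn (dot x v) = if v == 0 then (2 ^ n)%:R else 0.
Proof.
have [-> | v_neq0] := eqVneq v 0.
  by under eq_bigr do rewrite dot0r; rewrite sumr_const card_rV_F2.
have /existsP[i /eqP vi] : [exists i, v 0 i == 1].
  apply: contraNT v_neq0 => /existsPn v0; apply/eqP/matrixP => a j.
  by rewrite ord1 mxE; case: (F2P (v 0 j)) (v0 j) => ->.
(* translating by the i-th unit vector flips every sign *)
apply/eqP; rewrite -eqNr -sumrN [X in _ == X](reindex_inj (addIr (delta_mx 0 i))).
by apply/eqP/eq_bigr => x _; rewrite /= dotDl dot_delta vi sgnD mulrN1.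
Qed.

Lemma bentE_sqr (f : 'rV['F_2]_n -> 'F_2) :
  ~~ odd n -> bent f = [forall a, walsh f a ^+ 2 == (2 ^ n)%:R].
Proof.
move=> n_even; have e2 : (2 ^ n)%:R = ((2 ^ n./2)%:R) ^+ 2 :> int.
  by rewrite -natrX -expnM muln2 (even_halfK n_even).
apply: eq_forallb => a; rewrite e2 -(real_normK (num_real (walsh f a))).
by rewrite eqrXn2 ?normr_ge0 ?ler0n.
Qed.

End DotProduct.

Section QuadraticWalsh.
Variables (n : nat) (f : 'rV['F_2]_n -> 'F_2) (M : 'M['F_2]_n).
Hypothesis fD : forall x y, f (x + y) + f x + f y + f 0 = (x *m M *m y^T) 0 0.

Lemma fD_dot x y : f (x + y) + f x + f y + f 0 = dot x (y *m M^T).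
Proof. by rewrite fD /dot trmx_mul trmxK mulmxA. Qed.

Lemma walsh_sqr a : walsh f a ^+ 2 =
  (2 ^ n)%:R * \sum_(z | z *m M^T == 0) sgn (f z + f 0 + dot z a).
Proof.
rewrite walshE expr2 big_distrlr.
transitivity (\sum_x \sum_z sgn (dot x (z *m M^T)) * sgn (f z + f 0 + dot z a)).
  apply: eq_bigr => x _; rewrite (reindex_inj (addrI x)) /=.
  apply: eq_bigr => z _; rewrite -!sgnD -fD_dot dotDl; congr sgn; ring: F2_two.
rewrite exchange_big mulr_sumr [RHS]big_mkcond; apply: eq_bigr => z _ /=.
by rewrite -mulr_suml sum_sgn_dot; case: eqP; rewrite ?mul0r.
Qed.

Lemma sum_sgn_walsh_sqr z0 : z0 *m M^T = 0 ->
  \sum_a sgn (dot a z0) * walsh f a ^+ 2 = (2 ^ n)%:R * (2 ^ n)%:R * sgn (f z0 + f 0).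
Proof.
move=> z0M; under eq_bigr do rewrite walsh_sqr mulrCA mulr_sumr.
rewrite -mulr_sumr exchange_big -mulrA; congr (_ * _).
transitivity (\sum_(z | z *m M^T == 0) sgn (f z + f 0) * \sum_a sgn (dot a (z + z0))).
  apply: eq_bigr => z _; rewrite mulr_sumr; apply: eq_bigr => a _.
  rewrite -!sgnD dotDr (dotC z); congr sgn; ring: F2_two.
rewrite (bigD1 z0) ?z0M //= addmx_F2 sum_sgn_dot eqxx mulrC big1 ?addr0 // => z.
by case/andP=> _ z_neq; rewrite sum_sgn_dot addmx_eq0_F2 (negbTE z_neq) mulr0.
Qed.

Lemma bentE : ~~ odd n -> bent f = (\det M != 0).
Proof.
have pow2_neq0 : (2 ^ n)%:R != 0 :> int by rewrite pnatr_eq0 expn_eq0.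
move=> n_even; rewrite bentE_sqr //; apply/forallP/idP => [walsh_flat | detM a].
  apply: contraT; rewrite negbK -det_tr => /det0P[z0 z0_neq0 z0M].
  have := sum_sgn_walsh_sqr z0M.
  under eq_bigr do rewrite (eqP (walsh_flat _)) mulrC.
  rewrite -mulr_sumr (sum_sgn_dot z0).
  move/eqP; rewrite (negbTE z0_neq0) mulr0 eq_sym !mulf_eq0 (negbTE pow2_neq0).
  by rewrite (negbTE (sgn_neq0 _)).
have unitMT : M^T \in unitmx by rewrite unitmx_tr unitmxE unitfE.
have ker0 (z : 'rV_n) : (z *m M^T == 0) = (z == 0).
  apply/eqP/eqP => [zM | ->]; last exact: mul0mx.
  by rewrite -(mulmxK unitMT z) zM mul0mx.
rewrite walsh_sqr (eq_bigl _ _ ker0) big_pred1_eq dot0l.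
by rewrite (_ : f 0 + f 0 + 0 = 0) ?mulr1 //; ring: F2_two.
Qed.

End QuadraticWalsh.

Definition polar_mx n (f : 'rV['F_2]_n -> 'F_2) : 'M['F_2]_n :=
  \matrix_(i, j) (f (delta_mx 0 i + delta_mx 0 j) + f (delta_mx 0 i) + f (delta_mx 0 j) + f 0).

Section PolarMatrix.
Variable n : nat.
Implicit Types (f : 'rV['F_2]_n -> 'F_2) (x y : 'rV['F_2]_n).

Lemma polar_mx_sym f i j : polar_mx f i j = polar_mx f j i.
Proof. by rewrite !mxE (addrC (delta_mx 0 j)); ring. Qed.

Lemma polar_mx_diag f i : polar_mx f i i = 0.
Proof. by rewrite mxE addmx_F2; ring: F2_two. Qed.

Lemma polar_mx_compFD (F : 'rV['F_2]_n -> 'rV['F_2]_n) b b' :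
  polar_mx (compF F (b + b')) = polar_mx (compF F b) + polar_mx (compF F b').
Proof. by apply/matrixP => i j; rewrite !mxE /compF !dotDl; ring. Qed.

Lemma bilin_trmx (A : 'M['F_2]_n) x y : (y *m A *m x^T) 0 0 = (x *m A^T *m y^T) 0 0.
Proof. by rewrite -[in RHS](trmxK x) -mulmxA -!trmx_mul [RHS]mxE. Qed.

Lemma qform_polar (A : 'M['F_2]_n) x y :
  qform A (x + y) + qform A x + qform A y = (x *m (A + A^T) *m y^T) 0 0.
Proof.
have -> : (x *m (A + A^T) *m y^T) 0 0 = dot (x *m A) y + dot (x *m A^T) y.
  by rewrite -dotDl mulmxDr.
have -> : dot (x *m A^T) y = dot (y *m A) x by rewrite /dot bilin_trmx trmxK.
have qdot z : qform A z = dot (z *m A) z by [].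
rewrite !qdot !(mulmxDl, dotDl, dotDr).
by ring: F2_two.
Qed.

Lemma polar_mx_affine_qform f (A : 'M['F_2]_n) c (d : 'F_2) :
    (forall x, f x = qform A x + dot c x + d) ->
  forall x y, f (x + y) + f x + f y + f 0 = (x *m polar_mx f *m y^T) 0 0.
Proof.
move=> fE; have fE0 x : f x + f 0 = qform A x + dot c x.
  have qform0 : qform A 0 = 0 by rewrite /qform !mul0mx mxE.
  by rewrite !fE qform0 dot0r; ring: F2_two.
have polar x y : f (x + y) + f x + f y + f 0 = (x *m (A + A^T) *m y^T) 0 0.
  (* [ring: F2_two] only cancels coefficients equal to 2: split off [f 0] first *)
  rewrite -[LHS]addr0 -(F2_addrr (f 0)).
  have -> : f (x + y) + f x + f y + f 0 + (f 0 + f 0) =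
            (f (x + y) + f 0) + (f x + f 0) + (f y + f 0) by ring.
  by rewrite !fE0 -qform_polar dotDr; ring: F2_two.
suff -> : polar_mx f = A + A^T by [].
by apply/matrixP => i j; rewrite mxE polar -rowE trmx_delta -colE !mxE.
Qed.

End PolarMatrix.

Section AlternatingParity.
Variables (m n : nat) (Mf : 'rV['F_2]_m -> 'M['F_2]_n).
Hypothesis MfD : {morph Mf : b b' / b + b'}.
Hypothesis Mf_sym : forall b i j, Mf b i j = Mf b j i.
Hypothesis Mf_diag : forall b i, Mf b i i = 0.

Lemma exists_kernel_matching (U : 'M['F_2]_m) (s : 'I_n -> 'I_n) :
    (n./2 < \rank U)%N -> involutive s -> (forall i, s i != i) ->
  exists2 u, u \in vecs U :\ 0 & forall i, Mf u i (s i) = 0.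
Proof.
move=> rankU sK s_fpf; set R := [set i : 'I_n | (i < s i)%N].
pose h b : 'rV['F_2]_#|R| := \row_j Mf b (enum_val j) (s (enum_val j)).
have /dinjectivePn[b1 b1U [b2 /andP[b21 b2U] hb]] : ~~ dinjectiveb h (vecs U).
  apply/negP => /dinjectiveP /leq_card_in.
  by rewrite card_vecs card_rV_F2 card_lt_involution // leqNgt ltn_exp2l ?rankU.
move: b1U b2U; rewrite !inE => b1U b2U.
exists (b1 + b2); first by rewrite !inE addmx_eq0_F2 eq_sym b21 addmx_sub.
have Mu_R i : i \in R -> Mf (b1 + b2) i (s i) = 0.
  move=> iR; rewrite MfD mxE.
  have := congr1 (fun v : 'rV['F_2]_#|R| => v 0 (enum_rank_in iR i)) hb.
  by rewrite !mxE enum_rankK_in // => ->; apply: F2_addrr.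
move=> i; have [iR | iNR] := boolP (i \in R); first exact: Mu_R.
rewrite Mf_sym; have := Mu_R (s i); rewrite sK; apply.
move: iNR; rewrite !inE sK -leqNgt leq_eqVlt.
by rewrite (inj_eq val_inj) (negbTE (s_fpf i)).
Qed.

Lemma sum_det_eq0 (U : 'M['F_2]_m) :
  (n./2 < \rank U)%N -> \sum_(b in vecs U) \det (Mf b) = 0.
Proof.
move=> rankU; under eq_bigr do rewrite det_pchar2 ?pchar_Fp //.
rewrite exchange_big /= (@sum_involution_pchar2 _ _ _ (fun s => s^-1)%g) ?pchar_Fp //;
  last 2 first.
- exact: invgK.
- move=> s _; apply: eq_bigr => b _; rewrite (reindex_inj (@perm_inj _ s)) /=.
  by apply: eq_bigr => i _; rewrite permK Mf_sym.
apply: big1 => s /eqP sK.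
have {}sK : involutive s by move=> i; rewrite -{1}sK permK.
have [i /eqP si | s_fpf] := pickP (fun i => s i == i).
  by apply: big1 => b _; rewrite (bigD1 i) //= si Mf_diag mul0r.
have [u uU Mu] := exists_kernel_matching rankU sK (fun i => negbT (s_fpf i)).
move: uU; rewrite !inE => /andP[u_neq0 uU].
rewrite (@sum_involution_pchar2 _ _ _ (+%R^~ u)) ?pchar_Fp //.
- apply: big_pred0 => b /=.
  by rewrite -[X in _ == X]addr0 (inj_eq (addrI b)) (negbTE u_neq0) andbF.
- by move=> b; rewrite /= -addrA addmx_F2 addr0.
- by move=> b; rewrite !inE addmx_subr.
- by move=> b _; rewrite MfD; apply: eq_bigr => i _; rewrite mxE Mu addr0.
Qed.

End AlternatingParity.

Section NonbentComponents.
Variables (n : nat) (F : 'rV['F_2]_n -> 'rV['F_2]_n).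
Hypotheses (n_even : ~~ odd n) (F_quad : quadratic_fun F).

Lemma compF_polar b x y :
  compF F b (x + y) + compF F b x + compF F b y + compF F b 0 =
  (x *m polar_mx (compF F b) *m y^T) 0 0.
Proof. by have [A [c [d fE]]] := F_quad b; exact: (polar_mx_affine_qform fE). Qed.

Lemma inNF b : (b \in NF F) = (b != 0) && (\det (polar_mx (compF F b)) == 0).
Proof. by rewrite inE (bentE (@compF_polar b) n_even) negbK. Qed.

Lemma odd_card_NF (U : 'M['F_2]_n) : (n./2 < \rank U)%N -> odd #|vecs U :&: NF F|.
Proof.
move=> rankU; have n_gt0 : (0 < n)%N by have := rank_leq_col U; lia.
have := sum_det_eq0 (polar_mx_compFD F) (fun b => polar_mx_sym (compF F b))
  (fun b => polar_mx_diag (compF F b)) rankU.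
rewrite (big_setID (NF F)) /= big1 ?add0r => [|b /setIP[_]]; last first.
  by rewrite inNF => /andP[_ /eqP].
have U0 : 0 \in vecs U :\: NF F by rewrite !inE eqxx sub0mx.
rewrite (big_setD1 _ U0) /=.
have -> : polar_mx (compF F 0) = 0%:M.
  by apply/matrixP => i j; rewrite !mxE /compF !dot0l !addr0 mul0rn.
rewrite det_scalar expr0n eqn0Ngt n_gt0 add0r.
(* [det M_b] is 1 exactly for the nonzero [b] outside [NF F] *)
rewrite (eq_bigr (fun _ => 1)) => [|b]; last first.
  rewrite in_setD1 in_setD inNF => /andP[b_neq0 /andP[]]; rewrite b_neq0 /=.
  by case: (F2P (\det (polar_mx (compF F b)))) => ->.
rewrite sumr_const => /eqP; rewrite F2_natr_eq0 => /negbTE even_rest.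
have := cardsID (NF F) (vecs U); rewrite card_vecs (cardsD1 0 (vecs U :\: NF F)) U0.
move/(congr1 odd); rewrite !oddD oddX even_rest eqn0Ngt (leq_ltn_trans _ rankU) //=.
by rewrite addbT => /negbFE.
Qed.
End NonbentComponents.

Lemma setD1_subset (T : finType) (A B : {set T}) x :
  A \subset B :|: [set x] -> A :\ x \subset B.
Proof.
move/subsetP=> AB; apply/subsetP=> y /setD1P[yx /AB].
by rewrite !inE (negbTE yx) orbF.
Qed.

Lemma mxrank_compl (K : fieldType) n (V W : 'M[K]_n) :
  (V + W == (1%:M : 'M[K]_n))%MS -> (V :&: W == (0 : 'M[K]_n))%MS ->
  (\rank V + \rank W)%N = n.
Proof.
by move=> VW1 VW0; rewrite -mxrank_sum_cap (eqmx_rank VW1) (eqmx_rank VW0) mxrank1 mxrank0 addn0.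
Qed.

Lemma mxrank_cap_compl (K : fieldType) n (U V W : 'M[K]_n) :
    (V + W == (1%:M : 'M[K]_n))%MS -> (V :&: W == (0 : 'M[K]_n))%MS ->
  ((\rank U).*2 <= n + \rank (U :&: V) + \rank (U :&: W))%N.
Proof.
move=> VW1 VW0; have := mxrank_compl VW1 VW0.
have := mxrank_sum_cap U V; have := mxrank_sum_cap U W.
have := rank_leq_col (U + V)%MS; have := rank_leq_col (U + W)%MS; lia.
Qed.

Lemma half_le_mxrank_compl (K : fieldType) n (V W : 'M[K]_n) :
    ~~ odd n -> (V + W == (1%:M : 'M[K]_n))%MS -> (V :&: W == (0 : 'M[K]_n))%MS ->
  (\rank V <= n./2)%N -> (n./2 <= \rank W)%N.
Proof.
move=> n_even VW1 VW0; have := mxrank_compl VW1 VW0; have := even_halfK n_even.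
by rewrite -addnn; lia.
Qed.

Lemma leq_pred_exp2 a : (a <= 2 ^ a - 1)%N.
Proof. by have := ltn_expl a (ltnSn 1); lia. Qed.

Lemma sub_add_row_F2 n (v x : 'rV['F_2]_n) (W : 'M['F_2]_n) :
  (x <= v + W)%MS -> (x <= W)%MS \/ ((x + v)%R <= W)%MS.
Proof.
case/sub_addsmxP => [[a w] /= ->]; rewrite [a]mx11_scalar mul_scalar_mx.
case: (F2P (a 0 0)) => ->; [left | right]; first by rewrite scale0r add0r submxMl.
by rewrite scale1r addrAC addmx_F2 add0r submxMl.
Qed.

Lemma expn2_three_bound m k : (k <= m)%N ->
  (3 * (2 ^ m - 1) <= 2 * (2 ^ k - 1) + (2 ^ (m.*2 - k) - 1))%N.
Proof.
move=> km; rewrite -(subnKC km); set j := (m - k)%N.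
have -> : ((k + j).*2 - k = k + j + j)%N by lia.
rewrite !expnD; have := expn_gt0 2 k; have := expn_gt0 2 j.
move: (2 ^ k)%N (2 ^ j)%N => a c /= c_gt0 a_gt0.
have [c_le1 | c_ge2] := leqP c 1.
  have -> : c = 1%N by lia.
  lia.
(* [3ac <= 2a + ac^2] as [(c - 1)(c - 2) >= 0] *)
have -> : c = ((c - 2) + 2)%N by lia.
by move: (c - 2)%N => d; nia.
Qed.

Section OddIntersectionSets.
Variables (n : nat) (N : {set 'rV['F_2]_n}) (V W : 'M['F_2]_n).
Hypothesis n_even : ~~ odd n.
Hypothesis N_odd : forall U : 'M_n, (n./2 < \rank U)%N -> odd #|vecs U :&: N|.
Hypothesis N0 : 0 \notin N.
Hypotheses (V_N : vecs V :\ 0 \subset N) (W_N : vecs W :\ 0 \subset N).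
Hypothesis VW_full : (V + W == (1%:M : 'M_n))%MS.
Hypothesis VW_cap : (V :&: W == (0 : 'M_n))%MS.

Lemma sub_capVW (x : 'rV_n) : (x <= V)%MS -> (x <= W)%MS -> x = 0.
Proof.
move=> xV xW; apply/eqP; rewrite -submx0 -(eqmx0P VW_cap).
by rewrite sub_capmx xV xW.
Qed.

Lemma vecsD1_cap0 (X Y : 'M_n) : (X <= V)%MS -> (Y <= W)%MS ->
  (vecs X :\ 0) :&: (vecs Y :\ 0) = set0.
Proof.
move=> XV YW; apply/setP => x; rewrite !inE; apply/negbTE/negP.
move=> /and3P[/andP[x_neq0 xX] _ xY].
by rewrite (sub_capVW (submx_trans xX XV) (submx_trans xY YW)) eqxx in x_neq0.
Qed.

Lemma blocking U : \rank U = n./2.+1 -> (3 <= #|vecs U :&: N|)%N.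
Proof.
move=> rankU; set P := (U :&: V)%MS; set Q := (U :&: W)%MS.
have rankPQ : (2 <= \rank P + \rank Q)%N.
  have := mxrank_cap_compl U VW_full VW_cap.
  by rewrite rankU doubleS (even_halfK n_even) -addnA -addn2 leq_add2l.
have PQ_N : (vecs P :\ 0) :|: (vecs Q :\ 0) \subset vecs U :&: N.
  apply/subsetP => x /setUP[] /setD1P[x_neq0];
    rewrite inE sub_capmx => /andP[xU xX]; rewrite in_setI [x \in vecs U]inE xU.
  - by apply: (subsetP V_N); rewrite in_setD1 x_neq0 inE.
  - by apply: (subsetP W_N); rewrite in_setD1 x_neq0 inE.
have two_le : (2 <= #|vecs U :&: N|)%N.
  apply: leq_trans (subset_leq_card PQ_N).
  rewrite cardsU vecsD1_cap0 ?capmxSr // cards0 subn0 !card_vecsD1.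
  exact: leq_trans rankPQ (leq_add (leq_pred_exp2 _) (leq_pred_exp2 _)).
have : odd #|vecs U :&: N| by apply: N_odd; rewrite rankU.
by move: two_le; rewrite leq_eqVlt => /orP[/eqP <- | ].
Qed.

Section SmallV.
Hypothesis rankV : (\rank V <= n./2)%N.

Lemma exists_N_coset v : v \in vecs V :\ 0 ->
  exists2 x, x \in N & (x != v) && ((x + v)%R <= W)%MS.
Proof.
rewrite in_setD1 inE => /andP[v_neq0 vV].
have rank_v : \rank v = 1%N by apply/eqP; rewrite eqn_leq rank_leq_row lt0n mxrank_eq0.
have rank_vW : \rank (v + W)%MS = (\rank W).+1.
  have cap0 : \rank (v :&: W)%MS = 0%N.
    apply/eqP; rewrite mxrank_eq0 -submx0 -(eqmx0P VW_cap).
    exact: capmxS vV (submx_refl W).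
  by have := mxrank_sum_cap v W; rewrite cap0 rank_v addn0 add1n.
have rankW_ge := half_le_mxrank_compl n_even VW_full VW_cap rankV.
have rankW_gt0 : (0 < \rank W)%N.
  have rankV_gt0 : (0 < \rank V)%N by move: (mxrankS vV); rewrite rank_v.
  exact: leq_trans rankV_gt0 (leq_trans rankV rankW_ge).
set small := v |: (vecs W :\ 0).
have small_sub : small \subset vecs (v + W)%MS :&: N.
  apply/subsetP => x /setU1P[-> | xW0]; rewrite in_setI inE.
    by rewrite addsmxSl (subsetP V_N) // in_setD1 v_neq0 inE.
  move: (xW0); rewrite in_setD1 inE => /andP[_ xW].
  by rewrite (submx_trans xW (addsmxSr _ _)) (subsetP W_N).
have vNW : v \notin vecs W :\ 0.
  by rewrite in_setD1 inE; apply: contraNN v_neq0 => /andP[_ vW]; rewrite (sub_capVW vV vW).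
have : small \proper vecs (v + W)%MS :&: N.
  have vW_odd : odd #|vecs (v + W)%MS :&: N|.
    by apply: N_odd; rewrite rank_vW ltnS rankW_ge.
  rewrite properEneq small_sub andbT; apply: contraTneq vW_odd => <-.
  rewrite cardsU1 vNW card_vecsD1 add1n subn1 prednK ?expn_gt0 // oddX.
  by rewrite orbF -lt0n rankW_gt0.
case/properP => _ [x /setIP[]]; rewrite inE => x_vW xN.
rewrite in_setU1 in_setD1 inE negb_or => /andP[x_neq_v xW0].
exists x; rewrite // x_neq_v; case: (sub_add_row_F2 x_vW) => // xW.
by move: xW0; rewrite xW andbT negbK => /eqP x0; move: N0; rewrite -x0 xN.
Qed.

Lemma card_N_ge : (3 * (2 ^ n./2 - 1) <= #|N|)%N.
Proof.
pose projV (x : 'rV_n) := x *m proj_mx V W.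
have VW0 := eqmx0P VW_cap.
set S := N :\: (vecs V :|: vecs W).
have V_projS : vecs V :\ 0 \subset projV @: S.
  apply/subsetP => v vV0; have [x xN /andP[x_neq_v xvW]] := exists_N_coset vV0.
  move: vV0; rewrite in_setD1 inE => /andP[v_neq0 vV].
  have x_eq : x = (x + v) + v by rewrite -addrA addmx_F2 addr0.
  apply/imsetP; exists x; last first.
    by rewrite /projV x_eq mulmxDl proj_mx_0 ?proj_mx_id // add0r.
  rewrite !inE xN negb_or andbT; apply/andP; split.
    apply: contra x_neq_v => xV.
    by rewrite -addmx_eq0_F2 (sub_capVW (addmx_sub xV vV) xvW).
  apply: contra v_neq0 => xW; apply/eqP/(sub_capVW vV).
  by rewrite -[v]add0r -(addmx_F2 x) -addrA addmx_sub.
have VW_N : (vecs V :\ 0) :|: (vecs W :\ 0) \subset N :&: (vecs V :|: vecs W).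
  by rewrite subsetI subUset V_N W_N setUSS ?subD1set.
have := subset_leq_card VW_N.
rewrite cardsU vecsD1_cap0 // cards0 subn0 !card_vecsD1.
have := leq_trans (subset_leq_card V_projS) (leq_imset_card _ _); rewrite card_vecsD1.
have rankW : \rank W = (n./2.*2 - \rank V)%N.
  rewrite (even_halfK n_even); apply: (@addnI (\rank V)).
  by rewrite subnKC ?rank_leq_col ?mxrank_compl.
rewrite -(cardsID (vecs V :|: vecs W) N) rankW => cardS cardVW.
apply: leq_trans (expn2_three_bound rankV) _.
by rewrite mul2n -addnn addnAC leq_add.
Qed.
End SmallV.
End OddIntersectionSets.

Theorem mainTheorem19 (n : nat) (F : 'rV['F_2]_n -> 'rV['F_2]_n) (V W : 'M['F_2]_n) :
  ~~ odd n ->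
  quadratic_fun F ->
  vecs V \subset NF F :|: [set 0] ->
  vecs W \subset NF F :|: [set 0] ->
  (V + W == (1%:M : 'M['F_2]_n))%MS -> (V :&: W == (0 : 'M['F_2]_n))%MS ->
  (3 * (2 ^ n./2 - 1) <= #|NF F|)%N /\
  (forall U : 'M['F_2]_n, \rank U = (n./2).+1 -> (3 <= #|vecs U :&: NF F|)%N).
Proof.
move=> n_even F_quad /setD1_subset V_NF /setD1_subset W_NF VW_full VW_cap.
have NF_odd := odd_card_NF n_even F_quad.
have NF0 : 0 \notin NF F by rewrite inE eqxx.
split=> [|U]; last exact: (blocking n_even NF_odd V_NF W_NF VW_full VW_cap (U := U)).
have [rankV | rankV] := leqP (\rank V) n./2.
  exact: (card_N_ge n_even NF_odd NF0 V_NF W_NF VW_full VW_cap rankV).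
have WV_full : (W + V == (1%:M : 'M_n))%MS by rewrite addsmxC.
have WV_cap : (W :&: V == (0 : 'M_n))%MS by rewrite capmxC.
apply: (card_N_ge n_even NF_odd NF0 W_NF V_NF WV_full WV_cap).
have := mxrank_compl VW_full VW_cap; have := even_halfK n_even.
by rewrite -addnn; lia.
Qed.
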